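(* Consider the dynamic composite online convex optimization setting in the context, suppose that the Regularity Assumption, the Lipschitz-likeness Assumption on $\mathbb{B}_h$, and the non-expansiveness Assumption on the maps $\Phi_t$ hold, and that $r_t$ is available so that $\hat{r}_t=r_t$. Run OptDCMD with $\hat r_t=r_t$: starting from some $y_0\in\mathbb{X}$, for $t=1,\dots,T$, $$x_t=\arg\min_{x\in\mathbb{X}}\big\{\eta_t\langle\nabla\hat{s}_t(y_{t-1}),x\rangle+\eta_t r_t(x)+\mathbb{B}_h(x,y_{t-1})\big\},$$ $$\tilde{y}_t=\arg\min_{y\in\mathbb{X}}\big\{\eta_t\langle\nabla s_t(x_t),y\rangle+\eta_t r_t(y)+\mathbb{B}_h(y,y_{t-1})\big\},\qquad y_t=\Phi_t(\tilde{y}_t),$$ with step-size $\eta_1=\eta_2=\frac{1}{2\beta}$ and $\eta_t=\sqrt{\frac{C'_{t-2}+1}{D'_{t-1}+\theta_t}}$ for $t>2$, where the parameters $\theta_t$ are chosen such that $\eta_t\le\eta_{t-1}\le\frac{1}{2\beta}$ and $\theta_t\ge\theta_{t-1}$ for all $t$. Then $$\mathbf{Reg}^d_T\le O\Big(\sqrt{(\theta_T+D'_T)(1+C'_T)}\Big),$$ where $O(\cdot)$ hides constants not depending on $T$.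
   Context: Let $\mathcal{A}$ be a Banach space with norm $\|\cdot\|$ and dual norm $\|\cdot\|_*$. Bregman divergence: $\mathbb{B}_h(x,y)=h(x)-h(y)-\langle\nabla h(y),x-y\rangle$. $f$ is $\beta$-smooth if differentiable with $\|\nabla f(x)-\nabla f(y)\|_*\le\beta\|x-y\|$. At each round $t=1,\dots,T$ the player picks $x_t\in\mathbb{X}$ and incurs $f_t=s_t+r_t$; before choosing $x_t$ it has a gradient prediction $\nabla\hat{s}_t$ of $\nabla s_t$ and dynamical models $\Phi_t:\mathbb{X}\to\mathbb{X}$ of a reference sequence $u_1,\dots,u_{T+1}\in\mathbb{X}$. Regularity Assumption: (i) $\mathbb{X}\subseteq\mathcal{A}$ convex; (ii) $h$ differentiable and 1-strongly convex on $\mathbb{X}$; (iii) each $s_t$ convex and $\beta$-smooth, each $r_t$ convex; (iv) $\mathbb{B}_h(x,y)\le R^2$ for all $x,y\in\mathbb{X}$, some $R>0$; (v) $\|\nabla s_t(x)-\nabla\hat{s}_t(x)\|_*\le\sigma<\infty$ for all $t,x$; (vi) each function prediction $\hat{r}_t$ convex with $|r_t(x)-\hat{r}_t(x)|<\infty$. Lipschitz-likeness Assumption: there is $\gamma>0$ with $\mathbb{B}_h(x,z)-\mathbb{B}_h(y,z)\le\gamma\|x-y\|$ for all $x,y,z\in\mathbb{X}$. Non-expansiveness Assumption: $\mathbb{B}_h(\Phi_t(x),\Phi_t(y))\le\mathbb{B}_h(x,y)$ for all $x,y$, $t$. Define $D'_t=\sum_{\tau=1}^t\|\nabla s_\tau(y_{\tau-1})-\nabla\hat{s}_\tau(y_{\tau-1})\|_*^2$,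 $C'_t=\sum_{\tau=1}^t\|u_{\tau+1}-\Phi_\tau(u_\tau)\|$ (with $C'_0=0$), and dynamic regret $\mathbf{Reg}^d_T=\sum_{t=1}^T f_t(x_t)-\sum_{t=1}^T f_t(u_t)$. *)

From HB Require Import structures.
From mathcomp Require Import all_boot all_order all_algebra.
From mathcomp Require Import all_classical all_reals all_analysis.
Set Implicit Arguments. Unset Strict Implicit. Unset Printing Implicit Defensive.
Import Order.TTheory GRing.Theory Num.Theory.
Import numFieldNormedType.Exports.
Local Open Scope classical_set_scope.
Local Open Scope ring_scope.

Section Defs.
Context {R : realType} {E : normedModType R}.

Definition dual_norm (g : E -> R) : R :=
  sup [set g v | v in [set v : E | `|v| <= 1]].

Definition grad (f : E -> R) (x : E) : E -> R := fun v => 'd f x v.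

Definition breg (h : E -> R) (x y : E) : R := h x - h y - grad h y (x - y).

Definition convex_on (X : set E) (f : E -> R) : Prop :=
  forall x y (l : R), X x -> X y -> 0 <= l <= 1 ->
    f (l *: x + (1 - l) *: y) <= l * f x + (1 - l) * f y.

Definition differentiable_on (X : set E) (f : E -> R) : Prop :=
  forall x, X x -> differentiable f x.

Definition strongly_convex1_on (X : set E) (h : E -> R) : Prop :=
  differentiable_on X h /\
  forall x y, X x -> X y -> h x >= h y + grad h y (x - y) + 2^-1 * `|x - y| ^+ 2.

Definition smooth_on (X : set E) (beta : R) (f : E -> R) : Prop :=
  differentiable_on X f /\
  forall x y, X x -> X y ->
    dual_norm (fun v => grad f x v - grad f y v) <= beta * `|x - y|.

Definition is_argmin (X : set E) (F : E -> R) (x : E) : Prop :=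
  X x /\ forall z, X z -> F x <= F z.

Definition Cpath (u : nat -> E) (Phi : nat -> E -> E) (t : nat) : R :=
  \sum_(1 <= tau < t.+1) `|u tau.+1 - Phi tau (u tau)|.

Definition Dpred (s sh : nat -> E -> R) (y : nat -> E) (t : nat) : R :=
  \sum_(1 <= tau < t.+1)
     dual_norm (fun v => grad (s tau) (y tau.-1) v - grad (sh tau) (y tau.-1) v) ^+ 2.

Definition dyn_regret (s r : nat -> E -> R) (x u : nat -> E) (T : nat) : R :=
  \sum_(1 <= t < T.+1) ((s t (x t) + r t (x t)) - (s t (u t) + r t (u t))).

End Defs.

From HB Require Import structures.
From mathcomp Require Import all_boot all_order all_algebra.
From mathcomp Require Import all_classical all_reals all_analysis.
From mathcomp Require Import ring lra.
Import Order.TTheory GRing.Theory Num.Theory.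
Import numFieldNormedType.Exports.
Local Open Scope classical_set_scope.
Local Open Scope ring_scope.

(* Each round of optimistic mirror descent loses, up to the factor eta_t, the Bregman
   drop B(u_t, y_{t-1}) - B(u_t, ~y_t) plus eta_t^2 times the squared gradient-prediction
   error d_t: apply the three-point lemma to both argmin steps, then smoothness and
   Young's inequality, which is where 2 beta eta_t <= 1 is needed.  Non-expansiveness of
   Phi_t and Lipschitz-likeness of B_h turn B(u_t, ~y_t) into B(u_{t+1}, y_t) up to
   gamma ||u_{t+1} - Phi_t(u_t)||, so the drops telescope against the nonincreasing step
   sizes to (R^2 + gamma C'_T) / eta_T.  For the adaptive step sizes, eta_t d_t is at most
   a constant times sqrt(C'_T + 1) times the increment of sqrt(D'_t + theta_t), and
   1 / eta_T <= sqrt(D'_T + theta_T) / sqrt(C'_{T-2} + 1), where C'_T exceeds C'_{T-2} by at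
   most 4R because strong convexity bounds every distance in X by 2R. *)

Section Gradient.
Context {R : realType} {E : normedModType R}.
Implicit Types (f : E -> R) (p v w : E).

Lemma gradZ f p l v : grad f p (l *: v) = l * grad f p v.
Proof. exact: linearZ. Qed.

Lemma gradD f p v w : grad f p (v + w) = grad f p v + grad f p w.
Proof. exact: linearD. Qed.

Lemma gradB f p v w : grad f p (v - w) = grad f p v - grad f p w.
Proof. exact: linearB. Qed.

Lemma grad_bounded {f p} : differentiable f p ->
  exists k, forall v, `|grad f p v| <= k * `|v|.
Proof.
move=> df.
have /(linear_boundedP ('d f p)) : bounded_near ('d f p) (nbhs 0).
  exact/linear_bounded_continuous/diff_continuous.
by move=> [M [_ HM]]; exists (`|M| + 1); apply: HM; rewrite ltr_pwDr ?ler_norm.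
Qed.

End Gradient.

Section DualNorm.
Context {R : realType} {E : normedModType R}.

Section HomogeneousBounded.
Context {phi : E -> R}.
Hypothesis phiZ : forall l v, phi (l *: v) = l * phi v.
Hypothesis phi_bounded : exists k, forall v, `|phi v| <= k * `|v|.

Let dual_norm_ub v : `|v| <= 1 -> phi v <= dual_norm phi.
Proof.
move=> v1; apply: ub_le_sup; last by exists v.
have [k bnd] := phi_bounded; exists `|k| => _ [w /= w1 <-].
apply: le_trans (ler_norm _) (le_trans (bnd w) (le_trans (ler_norm _) _)).
by rewrite normrM normr_id ler_piMr.
Qed.

Lemma dual_norm_ge0 : 0 <= dual_norm phi.
Proof.
have phi0 : phi 0 = 0 by rewrite -(scale0r 0) phiZ mul0r.
by rewrite -phi0 dual_norm_ub // normr0.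
Qed.

Lemma le_dual_norm v : phi v <= dual_norm phi * `|v|.
Proof.
have [->|v0] := eqVneq v 0.
  by rewrite normr0 mulr0 -(scale0r 0) phiZ mul0r.
have nv : 0 < `|v| by rewrite normr_gt0.
have nw : `| `|v|^-1 *: v | = 1 by rewrite normrZ normfV normr_id mulVf ?gt_eqF.
rewrite -[v in phi v](scalerKV (lt0r_neq0 nv)) phiZ mulrC ler_pM2r //.
by rewrite dual_norm_ub ?nw.
Qed.

End HomogeneousBounded.

Section GradientDifference.
Context {f g : E -> R} {p q : E}.
Hypotheses (df : differentiable f p) (dg : differentiable g q).

Let grad_diffZ l v :
  grad f p (l *: v) - grad g q (l *: v) = l * (grad f p v - grad g q v).
Proof. by rewrite !gradZ mulrBr. Qed.

Let grad_diff_bounded :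
  exists k, forall v, `|grad f p v - grad g q v| <= k * `|v|.
Proof.
have [k1 b1] := grad_bounded df; have [k2 b2] := grad_bounded dg.
exists (k1 + k2) => v; apply: le_trans (ler_normB _ _) _.
by rewrite mulrDl lerD.
Qed.

Lemma dual_norm_grad_diff_ge0 :
  0 <= dual_norm (fun v => grad f p v - grad g q v).
Proof. exact: dual_norm_ge0 grad_diffZ grad_diff_bounded. Qed.

Lemma le_dual_norm_grad_diff v :
  grad f p v - grad g q v <= dual_norm (fun v => grad f p v - grad g q v) * `|v|.
Proof. exact: le_dual_norm grad_diffZ grad_diff_bounded v. Qed.

End GradientDifference.
End DualNorm.

Section FirstOrder.
Context {R : realType} {E : normedModType R}.
Implicit Types (X : set E) (f psi h : E -> R).

Lemma closed_cvg_at_right {A : set R} {g : R -> R} {l : R} : closed A ->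
  g e @[e --> 0^'] --> l -> (forall e, 0 < e <= 1 -> A (g e)) -> A l.
Proof.
move=> cA gl gA; apply: closed_cvg cA _ _ (cvg_dnbhs_at_right gl).
near=> e; apply: gA; apply/andP; split; first by near: e; exact: nbhs_right_gt.
by near: e; apply: nbhs_right_le; exact: ltr01.
Unshelve. all: by end_near.
Qed.

Lemma cvg_grad_quotient {f p} v : differentiable f p ->
  e^-1 * (f (e *: v + p) - f p) @[e --> 0^'] --> grad f p v.
Proof. by move=> df; rewrite /grad -deriveE //; exact: diff_derivable. Qed.

Lemma convex_combE (l : R) (a b : E) : l *: a + (1 - l) *: b = l *: (a - b) + b.
Proof. by rewrite scalerBr scalerBl scale1r [RHS]addrAC addrA. Qed.

Lemma convex_set_comb {X a b} {l : R} : convex_set X -> X a -> X b -> 0 <= l <= 1 ->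
  X (l *: a + (1 - l) *: b).
Proof.
move=> cX Xa Xb /andP[l0 l1].
by have := cX a b (Itv01 l0 l1); rewrite !inE; apply.
Qed.

Lemma convex_on_grad_le {X f p u} : convex_set X -> convex_on X f ->
  differentiable f p -> X p -> X u -> f p + grad f p (u - p) <= f u.
Proof.
move=> cX cf df Xp Xu.
suff : grad f p (u - p) <= f u - f p by lra.
apply: (closed_cvg_at_right (@closed_le _ _) (cvg_grad_quotient (u - p) df)) => e /andP[e0 e1].
have e01 : 0 <= e <= 1 by rewrite (ltW e0) e1.
rewrite /= ler_pdivrMl //.
by have := cf u p e Xu Xp e01; rewrite convex_combE; lra.
Qed.

Lemma convex_on_scale_grad_add f p {X rho} {k : R} : 0 <= k -> convex_on X rho ->
  convex_on X (fun z => k * grad f p z + k * rho z).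
Proof.
move=> k0 crho a b l Xa Xb l01.
rewrite gradD !gradZ.
have := ler_wpM2l k0 (crho a b l Xa Xb l01).
lra.
Qed.

Lemma argmin_three_point {X h psi y x u} :
  convex_set X -> differentiable_on X h -> convex_on X psi -> X u ->
  is_argmin X (fun z => psi z + breg h z y) x ->
  psi x + breg h x y + breg h u x <= psi u + breg h u y.
Proof.
move=> cX dh cpsi Xu [Xx xmin].
suff : psi x - psi u + grad h y (u - x) <= grad h x (u - x).
  by rewrite /breg !gradB; lra.
apply: (closed_cvg_at_right (@closed_ge _ _) (cvg_grad_quotient (u - x) (dh x Xx))).
move=> e /andP[e0 e1] /=; rewrite ler_pdivlMl //.
have e01 : 0 <= e <= 1 by rewrite (ltW e0) e1.
have := xmin _ (convex_set_comb cX Xu Xx e01).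
have := cpsi u x e Xu Xx e01.
rewrite convex_combE /breg !gradB !gradD !gradZ !gradB.
lra.
Qed.

End FirstOrder.

Section Bregman.
Context {R : realType} {E : normedModType R} {X : set E} {h : E -> R}.
Hypothesis h_sc : strongly_convex1_on X h.

Lemma breg_ge_half_sqr {a b} : X a -> X b -> `|a - b| ^+ 2 / 2 <= breg h a b.
Proof. by move=> Xa Xb; have := h_sc.2 a b Xa Xb; rewrite /breg; lra. Qed.

Lemma breg_ge0 {a b} : X a -> X b -> 0 <= breg h a b.
Proof.
by move=> Xa Xb; apply: le_trans _ (breg_ge_half_sqr Xa Xb); rewrite divr_ge0 ?sqr_ge0.
Qed.

Lemma norm_le_of_breg_le {Rd : R} {a b} : 0 <= Rd -> X a -> X b ->
  breg h a b <= Rd ^+ 2 -> `|a - b| <= 2 * Rd.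
Proof.
move=> Rd0 Xa Xb bRd; have := breg_ge_half_sqr Xa Xb.
rewrite -[_ <= 2 * Rd](ler_pXn2r (n := 2)) ?nnegrE ?mulr_ge0 //; nra.
Qed.

End Bregman.

Lemma young_step {R : realFieldType} (eta beta a b d : R) :
  2 * beta * eta <= 1 -> 0 <= a -> 0 <= b ->
  eta * (beta * a * b) + eta * (d * b) <= a ^+ 2 / 2 + b ^+ 2 / 2 + eta ^+ 2 * d ^+ 2.
Proof.
move=> eta_beta a0 b0.
have ab0 : 0 <= a * b by rewrite mulr_ge0.
have : 0 <= (a - b) ^+ 2 by rewrite sqr_ge0.
have : 0 <= (eta * d - b / 2) ^+ 2 by rewrite sqr_ge0.
nra.
Qed.

Lemma optimistic_mirror_step {R : realType} {E : normedModType R} {X : set E} {h S Rr Sh : E -> R}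
    {beta eta : R} {y0 x yt u : E} :
  convex_set X -> strongly_convex1_on X h ->
  convex_on X S -> smooth_on X beta S -> convex_on X Rr -> differentiable_on X Sh ->
  0 <= eta -> 2 * beta * eta <= 1 -> X y0 -> X u ->
  is_argmin X (fun z => eta * grad Sh y0 z + eta * Rr z + breg h z y0) x ->
  is_argmin X (fun z => eta * grad S x z + eta * Rr z + breg h z y0) yt ->
  eta * ((S x + Rr x) - (S u + Rr u)) <=
    breg h u y0 - breg h u yt +
    eta ^+ 2 * dual_norm (fun v => grad S y0 v - grad Sh y0 v) ^+ 2.
Proof.
move=> cX sc cS [dS smS] cRr dSh eta0 eta_beta Xy0 Xu xmin ytmin.
have [Xx _] := xmin; have [Xyt _] := ytmin.
have three_x := argmin_three_point cX sc.1
  (convex_on_scale_grad_add Sh y0 eta0 cRr) Xyt xmin.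
have three_yt := argmin_three_point cX sc.1
  (convex_on_scale_grad_add S x eta0 cRr) Xu ytmin.
have first_order := ler_wpM2l eta0 (convex_on_grad_le cX cS (dS x Xx) Xx Xu).
set a := `|x - y0|; set b := `|x - yt|.
set delta := dual_norm (fun v => grad S y0 v - grad Sh y0 v).
have smooth : grad S x (x - yt) - grad S y0 (x - yt) <= beta * a * b.
  apply: le_trans (le_dual_norm_grad_diff (dS x Xx) (dS y0 Xy0) (x - yt)) _.
  by rewrite ler_wpM2r // smS.
have predict : grad S y0 (x - yt) - grad Sh y0 (x - yt) <= delta * b.
  exact: le_dual_norm_grad_diff (dS y0 Xy0) (dSh y0 Xy0) _.
have := ler_wpM2l eta0 smooth; have := ler_wpM2l eta0 predict.
have Bx : a ^+ 2 / 2 <= breg h x y0 := breg_ge_half_sqr sc Xx Xy0.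
have Byt := breg_ge_half_sqr sc Xyt Xx; rewrite distrC -/b in Byt.
have := young_step eta beta a b delta eta_beta (normr_ge0 _) (normr_ge0 _).
rewrite !gradB in three_x three_yt first_order *.
lra.
Qed.

Lemma sum_le_decreasing_steps {R : realFieldType} (a e q P eta : nat -> R) (B : R) n :
  (forall t, (0 < t)%N -> 0 < eta t) -> (forall t, (1 < t)%N -> eta t <= eta t.-1) ->
  (forall t, 0 <= P t <= B) -> (forall t, 0 <= q t) ->
  (forall t, (0 < t)%N -> a t <= (P t - P t.+1 + q t) / eta t + e t) ->
  (0 < n)%N ->
  \sum_(1 <= t < n.+1) a t <=
    (B + \sum_(1 <= t < n.+1) q t) / eta n + \sum_(1 <= t < n.+1) e t.
Proof.
move=> eta0 eta_dec PB q0 step; case: n => // n _.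
have inv_eta0 t : (0 < t)%N -> 0 <= (eta t)^-1 by move=> t0; rewrite invr_ge0 ltW ?eta0.
suff telescoped : \sum_(1 <= t < n.+2) a t <=
    (B - P n.+2 + \sum_(1 <= t < n.+2) q t) / eta n.+1 + \sum_(1 <= t < n.+2) e t.
  apply: le_trans telescoped _; rewrite lerD2r ler_wpM2r ?inv_eta0 //.
  by have /andP[P0 _] := PB n.+2; lra.
elim: n => [|n IH].
  rewrite !big_nat1; apply: le_trans (step 1%N isT) _.
  by rewrite lerD2r ler_wpM2r ?inv_eta0 //; have /andP[_ PB1] := PB 1%N; lra.
rewrite !(big_nat_recr n.+2) //=.
set N := B - P n.+2 + \sum_(1 <= t < n.+2) q t in IH *.
have N0 : 0 <= N.
  have /andP[_ PB2] := PB n.+2; have : 0 <= \sum_(1 <= t < n.+2) q t by exact: sumr_ge0.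
  rewrite /N; lra.
have N_le : N / eta n.+1 <= N / eta n.+2.
  by rewrite ler_wpM2l // lef_pV2 ?posrE ?eta0 // eta_dec.
have := step n.+2 isT.
have -> : B - P n.+3 + (\sum_(1 <= t < n.+2) q t + q n.+2) =
  N + (P n.+2 - P n.+3 + q n.+2) by rewrite /N; ring.
rewrite mulrDl; lra.
Qed.

Lemma div_le_sqrt_increment {R : rcfType} {b p d sigma : R} :
  0 < b -> b <= p -> 0 <= sigma -> 0 <= d -> d <= sigma ^+ 2 ->
  d / p <= (2 + sigma / b) * (Num.sqrt (p ^+ 2 + d) - p).
Proof.
move=> b0 bp sigma0 d0 d_le.
have p0 : 0 < p := lt_le_trans b0 bp.
set A := Num.sqrt (p ^+ 2 + d).
have A2 : A ^+ 2 = p ^+ 2 + d by rewrite sqr_sqrtr // addr_ge0 ?sqr_ge0.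
have pA : p <= A.
  by rewrite -(ler_pXn2r (n := 2)) ?nnegrE ?sqrtr_ge0 ?(ltW p0) // A2 lerDl.
have Ap : A <= p + sigma.
  rewrite -(ler_pXn2r (n := 2)) ?nnegrE ?sqrtr_ge0 ?addr_ge0 ?(ltW p0) // A2.
  nra.
have -> : d / p = (A - p) * (2 + (A - p) / p).
  by rewrite -[d](addKr (p ^+ 2)) -A2; field; rewrite lt0r_neq0.
rewrite mulrC ler_wpM2r ?subr_ge0 // lerD2l.
apply: (@le_trans _ _ (sigma / p)); first by rewrite ler_wpM2r ?invr_ge0 ?(ltW p0) //; lra.
by rewrite ler_wpM2l // lef_pV2 ?posrE.
Qed.

Lemma partial_sum_nondecreasing {R : numDomainType} (F : nat -> R) :
  (forall i, 0 <= F i) ->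
  {homo (fun n => \sum_(1 <= i < n.+1) F i) : m n / (m <= n)%N >-> m <= n}.
Proof.
by move=> F0 m n mn /=; rewrite [leRHS](big_cat_nat _ (n := m.+1)) //= lerDl sumr_ge0.
Qed.

Definition regret_const {R : realType} (beta Rd gamma sigma : R) : R :=
  Rd ^+ 2 + gamma * (1 + 4 * Rd) + sigma ^+ 2 / (2 * beta ^+ 2) + (2 + sigma / (2 * beta)).

Section OptDCMD.
Context {R : realType} {E : normedModType R} {X : set E} {h : E -> R}.
Context {beta Rd gamma sigma : R}.
Hypotheses (convexX : convex_set X) (h_sc : strongly_convex1_on X h).
Hypotheses (beta_gt0 : 0 < beta) (Rd_ge0 : 0 <= Rd) (gamma_ge0 : 0 <= gamma).
Hypothesis sigma_ge0 : 0 <= sigma.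
Hypothesis breg_le : forall a b, X a -> X b -> breg h a b <= Rd ^+ 2.
Hypothesis breg_lipschitz :
  forall a b z, X a -> X b -> X z -> breg h a z - breg h b z <= gamma * `|a - b|.

Context {s r sh : nat -> E -> R} {Phi : nat -> E -> E} {u : nat -> E}.
Context {theta eta : nat -> R} {x yt y : nat -> E}.
Hypotheses (s_convex : forall t, convex_on X (s t)) (s_smooth : forall t, smooth_on X beta (s t)).
Hypotheses (r_convex : forall t, convex_on X (r t)) (sh_diff : forall t, differentiable_on X (sh t)).
Hypothesis sh_err :
  forall t z, X z -> dual_norm (fun v => grad (s t) z v - grad (sh t) z v) <= sigma.
Hypothesis Phi_in : forall t z, X z -> X (Phi t z).
Hypothesis Phi_nonexpansive :
  forall t a b, X a -> X b -> breg h (Phi t a) (Phi t b) <= breg h a b.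
Hypothesis u_in : forall t, X (u t).

Local Notation C := (Cpath u Phi).
Local Notation D := (Dpred s sh y).

Hypothesis D_theta_gt0 : forall t, (2 < t)%N -> 0 < D t.-1 + theta t.
Hypothesis etaE :
  forall t, (2 < t)%N -> eta t = Num.sqrt ((C (t - 2) + 1) / (D t.-1 + theta t)).
Hypothesis eta_mono :
  forall t, (1 < t)%N -> eta t <= eta t.-1 /\ eta t.-1 <= (2 * beta)^-1.
Hypothesis theta_mono : forall t, (0 < t)%N -> theta t.-1 <= theta t.
Hypothesis y0_in : X (y 0%N).
Hypothesis x_argmin : forall t, (0 < t)%N -> is_argmin X
  (fun z => eta t * grad (sh t) (y t.-1) z + eta t * r t z + breg h z (y t.-1)) (x t).
Hypothesis yt_argmin : forall t, (0 < t)%N -> is_argmin X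
  (fun z => eta t * grad (s t) (x t) z + eta t * r t z + breg h z (y t.-1)) (yt t).
Hypothesis yE : forall t, (0 < t)%N -> y t = Phi t (yt t).

Let c t := `|u t.+1 - Phi t (u t)|.
Let d t := dual_norm (fun v => grad (s t) (y t.-1) v - grad (sh t) (y t.-1) v) ^+ 2.
Let M := 2 + sigma / (2 * beta).

Lemma y_in t : X (y t).
Proof. by case: t => // t; rewrite yE //; apply: Phi_in; case: (yt_argmin t.+1 isT). Qed.

Lemma CpathS t : C t.+1 = C t + c t.+1.
Proof. exact: big_nat_recr. Qed.

Lemma DpredS t : D t.+1 = D t + d t.+1.
Proof. exact: big_nat_recr. Qed.

Lemma Cpath_ge0 t : 0 <= C t.
Proof. by apply: sumr_ge0 => i _; exact: normr_ge0. Qed.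

Lemma Cpath_nondecreasing : {homo C : m n / (m <= n)%N >-> m <= n}.
Proof. by apply: partial_sum_nondecreasing => i; exact: normr_ge0. Qed.

Lemma Dpred_nondecreasing : {homo D : m n / (m <= n)%N >-> m <= n}.
Proof. by apply: partial_sum_nondecreasing => i; exact: sqr_ge0. Qed.

Lemma d_le t : d t <= sigma ^+ 2.
Proof.
have dn0 := dual_norm_grad_diff_ge0 ((s_smooth t).1 _ (y_in t.-1)) (sh_diff t _ (y_in t.-1)).
by apply: lerXn2r; rewrite ?nnegrE //; exact: sh_err (y_in _).
Qed.

Lemma c_le t : c t <= 2 * Rd.
Proof.
have Xa := u_in t.+1; have Xb := Phi_in t _ (u_in t).
exact: (norm_le_of_breg_le h_sc Rd_ge0 Xa Xb (breg_le _ _ Xa Xb)).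
Qed.

Lemma eta_sqrtE t : (2 < t)%N ->
  eta t = Num.sqrt (C (t - 2) + 1) / Num.sqrt (D t.-1 + theta t).
Proof.
move=> t2; rewrite etaE // sqrtrM ?sqrtrV //; first exact/ltW/D_theta_gt0.
by rewrite addr_ge0 ?Cpath_ge0.
Qed.

Lemma sqrt_Cpath_ge1 t : 1 <= Num.sqrt (C t + 1).
Proof. by rewrite -[leLHS]sqrtr1 ler_sqrt ?lerDr ?addr_ge0 ?Cpath_ge0. Qed.

Lemma eta_gt0 t : (0 < t)%N -> 0 < eta t.
Proof.
have eta3 : 0 < eta 3 by rewrite etaE // sqrtr_gt0 divr_gt0 ?D_theta_gt0 ?ltr_wpDl ?Cpath_ge0.
have eta2 : 0 < eta 2 := lt_le_trans eta3 (eta_mono 3 isT).1.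
case: t => [|[|[|t]]] // _; first exact: lt_le_trans eta2 (eta_mono 2 isT).1.
by rewrite etaE // sqrtr_gt0 divr_gt0 ?D_theta_gt0 ?ltr_wpDl ?Cpath_ge0.
Qed.

Lemma beta_eta_le t : (0 < t)%N -> 2 * beta * eta t <= 1.
Proof.
move=> t0; have [_ eta_le] := eta_mono t.+1 t0.
have beta2 : 0 < 2 * beta by rewrite mulr_gt0.
by apply: le_trans (ler_wpM2l (ltW beta2) eta_le) _; rewrite mulfV ?lt0r_neq0.
Qed.

Lemma regret_step t : (0 < t)%N ->
  s t (x t) + r t (x t) - (s t (u t) + r t (u t)) <=
    (breg h (u t) (y t.-1) - breg h (u t.+1) (y t) + gamma * c t) / eta t + eta t * d t.
Proof.
move=> t0; have eta0 := eta_gt0 t t0.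
have [Xyt _] := yt_argmin t t0.
have step := optimistic_mirror_step convexX h_sc (s_convex t) (s_smooth t) (r_convex t)
  (sh_diff t) (ltW eta0) (beta_eta_le t t0) (y_in t.-1) (u_in t) (x_argmin t t0) (yt_argmin t t0).
have tracking : breg h (u t.+1) (y t) - gamma * c t <= breg h (u t) (yt t).
  have := breg_lipschitz _ _ _ (u_in t.+1) (Phi_in t _ (u_in t)) (y_in t).
  have := Phi_nonexpansive t _ _ (u_in t) Xyt.
  rewrite -yE // /c; lra.
set N := breg h (u t) (y t.-1) - _ + _.
rewrite -(ler_pM2l eta0).
have -> : eta t * (N / eta t + eta t * d t) = N + eta t ^+ 2 * d t.
  by field; exact: lt0r_neq0.
rewrite /N /d; lra.
Qed.

Lemma regret_le_telescoped T : (0 < T)%N ->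
  dyn_regret s r x u T <= (Rd ^+ 2 + gamma * C T) / eta T + \sum_(1 <= t < T.+1) eta t * d t.
Proof.
move=> T0; rewrite /dyn_regret /Cpath mulr_sumr.
apply: (@sum_le_decreasing_steps _ _ _ _ (fun t => breg h (u t) (y t.-1))) => // t.
- exact: eta_gt0.
- by case/eta_mono.
- by rewrite (breg_ge0 h_sc (u_in t) (y_in _)) (breg_le _ _ (u_in t) (y_in _)).
- by rewrite mulr_ge0.
- exact: regret_step.
Qed.

Lemma M_ge0 : 0 <= M.
Proof. by rewrite /M addr_ge0 // divr_ge0 // ltW // mulr_gt0. Qed.

Lemma two_beta_le_sqrt t : (2 < t)%N ->
  2 * beta * Num.sqrt (C (t - 2) + 1) <= Num.sqrt (D t.-1 + theta t).
Proof.
move=> t2; have := beta_eta_le t (ltnW (ltnW t2)).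
by rewrite eta_sqrtE // mulrA ler_pdivrMr ?mul1r // sqrtr_gt0 D_theta_gt0.
Qed.

Lemma eta_d_le t T : (2 <= t < T)%N ->
  eta t.+1 * d t.+1 <=
    M * Num.sqrt (C T + 1) * (Num.sqrt (D t.+1 + theta t.+1) - Num.sqrt (D t + theta t)).
Proof.
move=> /andP[t2 tT].
set p := Num.sqrt (D t + theta t.+1); set A := Num.sqrt (D t.+1 + theta t.+1).
have D_theta0 : 0 < D t + theta t.+1 := D_theta_gt0 t.+1 t2.
have beta_p : 2 * beta <= p.
  apply: le_trans (two_beta_le_sqrt t.+1 t2).
  by rewrite ler_peMr ?sqrt_Cpath_ge1 // ltW // mulr_gt0.
have beta2 : 0 < 2 * beta by rewrite mulr_gt0.
have incr := div_le_sqrt_increment beta2 beta_p sigma_ge0 (sqr_ge0 _) (d_le t.+1).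
rewrite sqr_sqrtr ?(ltW D_theta0) // -/(d t.+1) [D t + _ + _]addrAC -DpredS -/A -/M in incr.
have q0q : Num.sqrt (C (t.+1 - 2) + 1) <= Num.sqrt (C T + 1).
  by rewrite ler_wsqrtr // lerD2r Cpath_nondecreasing // (leq_trans (leq_subr 2 t.+1) tT).
have pA : p <= A by rewrite ler_wsqrtr // lerD2r Dpred_nondecreasing.
have p_theta : Num.sqrt (D t + theta t) <= p.
  by rewrite ler_wsqrtr // lerD2l (theta_mono t.+1).
rewrite eta_sqrtE // -/p mulrAC -mulrA.
have -> : M * Num.sqrt (C T + 1) * (A - Num.sqrt (D t + theta t)) =
  Num.sqrt (C T + 1) * (M * (A - Num.sqrt (D t + theta t))) by ring.
apply: ler_pM; rewrite ?sqrtr_ge0 ?divr_ge0 ?sqr_ge0 ?sqrtr_ge0 //.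
apply: le_trans incr _; rewrite ler_wpM2l ?M_ge0 //; lra.
Qed.

Lemma sum_eta_d_le T : (2 <= T)%N ->
  \sum_(1 <= t < T.+1) eta t * d t <=
    sigma ^+ 2 / beta + M * Num.sqrt (C T + 1) * Num.sqrt (D T + theta T).
Proof.
move=> T2; rewrite (big_cat_nat _ (n := 3)) //=.
have early t : (0 < t)%N -> eta t * d t <= sigma ^+ 2 / (2 * beta).
  move=> t0; rewrite mulrC; apply: ler_pM.
  - exact: sqr_ge0.
  - exact: ltW (eta_gt0 t t0).
  - exact: d_le.
  - by have [] := eta_mono t.+1 t0.
have warmup : \sum_(1 <= t < 3) eta t * d t <= sigma ^+ 2 / beta.
  rewrite big_nat_recr //= big_nat1.
  have -> : sigma ^+ 2 / beta = sigma ^+ 2 / (2 * beta) + sigma ^+ 2 / (2 * beta).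
    by field; exact: lt0r_neq0.
  exact: lerD (early 1%N isT) (early 2%N isT).
have tail : \sum_(3 <= t < T.+1) eta t * d t <=
    M * Num.sqrt (C T + 1) * Num.sqrt (D T + theta T).
  rewrite big_add1 /=.
  apply: le_trans (ler_sum_nat (fun t => eta_d_le t T)) _.
  rewrite -mulr_sumr telescope_sumr // ler_wpM2l ?mulr_ge0 ?M_ge0 ?sqrtr_ge0 //.
  by rewrite gerBl sqrtr_ge0.
exact: lerD warmup tail.
Qed.

Lemma Cpath_le_shift t : C t.+2 <= (C t + 1) * (1 + 4 * Rd).
Proof.
rewrite !CpathS; have := c_le t.+1; have := c_le t.+2.
have := mulr_ge0 Rd_ge0 (Cpath_ge0 t); lra.
Qed.

Lemma comparator_term_le T : (3 <= T)%N ->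
  (Rd ^+ 2 + gamma * C T) / eta T <=
    (Rd ^+ 2 + gamma * (1 + 4 * Rd)) * (Num.sqrt (D T + theta T) * Num.sqrt (C T + 1)).
Proof.
move=> T3; set K := Rd ^+ 2 + gamma * (1 + 4 * Rd).
set q0 := Num.sqrt (C (T - 2) + 1); set p0 := Num.sqrt (D T.-1 + theta T).
have q0_gt0 : 0 < q0 := lt_le_trans ltr01 (sqrt_Cpath_ge1 _).
have K0 : 0 <= K by rewrite /K addr_ge0 ?sqr_ge0 // mulr_ge0 // addr_ge0 // mulr_ge0.
have num_le : Rd ^+ 2 + gamma * C T <= K * q0 ^+ 2.
  have q0_sqr : 1 <= q0 ^+ 2 by rewrite expr_ge1 ?sqrt_Cpath_ge1 // ltW.
  have := Cpath_le_shift (T - 2); rewrite -addn2 subnK ?(ltnW T3) // => C_le.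
  rewrite /q0 sqr_sqrtr ?addr_ge0 ?Cpath_ge0 // in q0_sqr *.
  have := ler_wpM2l gamma_ge0 C_le; have := sqr_ge0 Rd; rewrite /K; nra.
rewrite eta_sqrtE // invf_div -/p0 -/q0.
apply: le_trans (ler_wpM2r (divr_ge0 (sqrtr_ge0 _) (ltW q0_gt0)) num_le) _.
have -> : K * q0 ^+ 2 * (p0 / q0) = K * (p0 * q0) by field; exact: lt0r_neq0.
rewrite ler_wpM2l //; apply: ler_pM; rewrite ?sqrtr_ge0 ?(ltW q0_gt0) //.
  by rewrite ler_wsqrtr // lerD2r Dpred_nondecreasing // leq_pred.
by rewrite ler_wsqrtr // lerD2r Cpath_nondecreasing // leq_subr.
Qed.

Lemma two_beta_le_sqrt_prod T : (3 <= T)%N ->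
  2 * beta <= Num.sqrt (D T + theta T) * Num.sqrt (C T + 1).
Proof.
move=> T3; have p0p : Num.sqrt (D T.-1 + theta T) <= Num.sqrt (D T + theta T).
  by rewrite ler_wsqrtr // lerD2r Dpred_nondecreasing // leq_pred.
apply: le_trans (le_trans _ (two_beta_le_sqrt T T3)) (le_trans p0p _).
  by rewrite ler_peMr ?sqrt_Cpath_ge1 // mulr_ge0 // ltW.
by rewrite ler_peMr ?sqrt_Cpath_ge1 ?sqrtr_ge0.
Qed.

Lemma optdcmd_regret_bound T : (3 <= T)%N ->
  dyn_regret s r x u T <=
    regret_const beta Rd gamma sigma * Num.sqrt ((theta T + D T) * (1 + C T)).
Proof.
move=> T3.
have DT0 : 0 <= D T + theta T.
  apply: le_trans (ltW (D_theta_gt0 T T3)) _.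
  by rewrite lerD2r Dpred_nondecreasing // leq_pred.
rewrite [theta T + _]addrC [1 + _]addrC sqrtrM //.
have early : sigma ^+ 2 / beta <=
    sigma ^+ 2 / (2 * beta ^+ 2) * (Num.sqrt (D T + theta T) * Num.sqrt (C T + 1)).
  have -> : sigma ^+ 2 / beta = sigma ^+ 2 / (2 * beta ^+ 2) * (2 * beta).
    by field; exact: lt0r_neq0.
  rewrite ler_wpM2l ?two_beta_le_sqrt_prod //.
  by rewrite divr_ge0 ?sqr_ge0 // mulr_ge0 ?sqr_ge0.
have := regret_le_telescoped T (ltnW (ltnW T3)).
have := sum_eta_d_le T (ltnW T3); have := comparator_term_le T T3.
rewrite /regret_const -/M; lra.
Qed.

End OptDCMD.

Theorem theorem5
  (R : realType) (E : completeNormedModType R)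
  (X : set E) (h : E -> R) (beta Rd gamma sigma : R) :
  (* Regularity (i),(ii),(iv) *)
  convex_set X -> strongly_convex1_on X h ->
  0 < beta -> 0 < Rd -> 0 <= sigma ->
  (forall x y, X x -> X y -> breg h x y <= Rd ^+ 2) ->
  (* Lipschitz-likeness *)
  0 < gamma ->
  (forall x y z, X x -> X y -> X z -> breg h x z - breg h y z <= gamma * `|x - y|) ->
  exists K : R, forall
    (s r sh : nat -> E -> R) (Phi : nat -> E -> E) (u : nat -> E)
    (theta eta : nat -> R) (x yt y : nat -> E),
  (* Regularity (iii), (v) *)
  (forall t, convex_on X (s t) /\ smooth_on X beta (s t)) ->
  (forall t, convex_on X (r t)) ->
  (forall t, differentiable_on X (sh t)) ->
  (forall t z, X z -> dual_norm (fun v => grad (s t) z v - grad (sh t) z v) <= sigma) ->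
  (* dynamical models and non-expansiveness; reference sequence *)
  (forall t z, X z -> X (Phi t z)) ->
  (forall t a b, X a -> X b -> breg h (Phi t a) (Phi t b) <= breg h a b) ->
  (forall t, X (u t)) ->
  (* step sizes *)
  eta 1%N = (2 * beta)^-1 -> eta 2%N = (2 * beta)^-1 ->
  (forall t, (2 < t)%N -> 0 < Dpred s sh y t.-1 + theta t) ->
  (forall t, (2 < t)%N ->
     eta t = Num.sqrt ((Cpath u Phi (t - 2) + 1) / (Dpred s sh y t.-1 + theta t))) ->
  (forall t, (1 < t)%N -> eta t <= eta t.-1 /\ eta t.-1 <= (2 * beta)^-1) ->
  (forall t, (0 < t)%N -> theta t.-1 <= theta t) ->
  (* OptDCMD iterates with hat r_t = r_t, starting from y 0 in X *)
  X (y 0%N) ->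
  (forall t, (0 < t)%N -> is_argmin X
     (fun z => eta t * grad (sh t) (y t.-1) z + eta t * r t z + breg h z (y t.-1)) (x t)) ->
  (forall t, (0 < t)%N -> is_argmin X
     (fun z => eta t * grad (s t) (x t) z + eta t * r t z + breg h z (y t.-1)) (yt t)) ->
  (forall t, (0 < t)%N -> y t = Phi t (yt t)) ->
  forall T : nat, (3 <= T)%N ->
    dyn_regret s r x u T <=
      K * Num.sqrt ((theta T + Dpred s sh y T) * (1 + Cpath u Phi T)).
Proof.
move=> convexX h_sc beta_gt0 Rd_gt0 sigma_ge0 breg_le gamma_gt0 breg_lipschitz.
exists (regret_const beta Rd gamma sigma).
(* The values of eta 1 and eta 2 are not used: the early step sizes are positive because
   they dominate eta 3, and at most 1 / (2 beta) by the monotonicity hypothesis. *)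
move=> s r sh Phi u theta eta x yt y s_reg r_convex sh_diff sh_err Phi_in Phi_nonexpansive
  u_in _ _ D_theta_gt0 etaE eta_mono theta_mono y0_in x_argmin yt_argmin yE.
exact: (optdcmd_regret_bound convexX h_sc beta_gt0 (ltW Rd_gt0) (ltW gamma_gt0) sigma_ge0
  breg_le breg_lipschitz (fun t => (s_reg t).1) (fun t => (s_reg t).2) r_convex sh_diff
  sh_err Phi_in Phi_nonexpansive u_in D_theta_gt0 etaE eta_mono theta_mono y0_in
  x_argmin yt_argmin yE).
Qed.
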